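(* Let $f_\theta$ be any map that assigns to each integer linear program $\min_{\mathbf{x}}\{\mathbf{c}^\top\mathbf{x}\mid \mathbf{A}\mathbf{x}\le\mathbf{b},\ \mathbf{x}\in\mathbb{Z}^n\}$ (given via its bipartite representation $\mathcal{A}=\begin{bmatrix}\mathbf{A}&\mathbf{b}\\ \mathbf{c}^\top&0\end{bmatrix}\in\mathbb{R}^{(m+1)\times(n+1)}$) a vector $f_\theta(\mathcal{A})\in\mathbb{R}^n$, and which satisfies $f_\theta(\pi^c(\mathcal{A}))=\pi^v(f_\theta(\mathcal{A}))$ for all $\pi\in S_n$ and $f_\theta(\sigma^r(\mathcal{A}))=f_\theta(\mathcal{A})$ for all $\sigma\in S_m$. Then $f_\theta$ cannot always correctly predict an optimal solution of ILP instances with formulation symmetries: there exists an ILP instance possessing a nontrivial formulation symmetry such that $f_\theta(\mathcal{A})$ is not an optimal solution of that instance.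
   Context: $S_n$ is the set of permutations of $\{1,\dots,n\}$. For $\pi\in S_n$: $\pi^v(\mathbf{y})=[y_{\pi(1)},\dots,y_{\pi(n)},y_{n+1},\dots]^\top$ permutes the top-most $n$ entries of a vector; $\pi^r$ permutes the top-most $n$ rows of a matrix as $[\mathbf{X}_{\pi(1),:},\dots,\mathbf{X}_{\pi(n),:},\mathbf{X}_{n+1,:},\dots]^\top$; $\pi^c$ permutes the left-most $n$ columns as $[\mathbf{X}_{:,\pi(1)},\dots,\mathbf{X}_{:,\pi(n)},\mathbf{X}_{:,n+1},\dots]$; analogously for $\sigma\in S_m$. A permutation $\pi\in S_n$ is a formulation symmetry of the ILP if there exists $\sigma\in S_m$ with $\pi^v(\mathbf{c})=\mathbf{c}$, $\sigma^v(\mathbf{b})=\mathbf{b}$, and $A_{\sigma(i),\pi(j)}=A_{i,j}$ for all $i,j$. *)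

From HB Require Import structures.
From mathcomp Require Import all_boot all_order all_algebra all_fingroup.
From mathcomp Require Import reals.
Set Implicit Arguments. Unset Strict Implicit. Unset Printing Implicit Defensive.
Import Order.TTheory GRing.Theory Num.Theory.
Local Open Scope ring_scope.

Section ILP.
Variable R : realType.

Definition ext_perm (k : nat) (p : 'S_k) (j : 'I_k.+1) : 'I_k.+1 :=
  if (insub (val j) : option 'I_k) is Some j' then widen_ord (leqnSn k) (p j')
  else j.

Definition colperm m n (p : 'S_n) (M : 'M[R]_(m.+1, n.+1)) : 'M[R]_(m.+1, n.+1) :=
  \matrix_(i, j) M i (ext_perm p j).

Definition rowperm m n (s : 'S_m) (M : 'M[R]_(m.+1, n.+1)) : 'M[R]_(m.+1, n.+1) :=
  \matrix_(i, j) M (ext_perm s i) j.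

Definition vperm n (p : 'S_n) (y : 'cV[R]_n) : 'cV[R]_n :=
  \col_i y (p i) 0.

Definition ilp_rep m n (A : 'M[R]_(m, n)) (b : 'cV[R]_m) (c : 'cV[R]_n)
  : 'M[R]_(m.+1, n.+1) :=
  \matrix_(i, j)
    match (insub (val i) : option 'I_m), (insub (val j) : option 'I_n) with
    | Some i', Some j' => A i' j'
    | Some i', None => b i' 0
    | None, Some j' => c j' 0
    | None, None => 0
    end.

Definition ilp_feasible m n (A : 'M[R]_(m, n)) (b : 'cV[R]_m) (x : 'cV[R]_n) :=
  (forall j, x j 0 \is a Num.int) /\
  (forall i, \sum_j A i j * x j 0 <= b i 0).

Definition ilp_obj n (c : 'cV[R]_n) (x : 'cV[R]_n) := \sum_j c j 0 * x j 0.

Definition ilp_optimal m n (A : 'M[R]_(m, n)) (b : 'cV[R]_m) (c : 'cV[R]_n)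
  (x : 'cV[R]_n) :=
  ilp_feasible A b x /\
  (forall y, ilp_feasible A b y -> ilp_obj c x <= ilp_obj c y).

Definition formulation_symmetry m n (A : 'M[R]_(m, n)) (b : 'cV[R]_m)
  (c : 'cV[R]_n) (p : 'S_n) :=
  exists s : 'S_m,
    vperm p c = c /\ vperm s b = b /\ (forall i j, A (s i) (p j) = A i j).

End ILP.

(* A predictor that is equivariant under column permutations and invariant
   under row permutations of the bipartite representation returns, for every
   ILP, a vector fixed by each formulation symmetry, since a formulation
   symmetry together with its row permutation fixes the representation.  For
   min {-x0 - x1 | x0 + x1 <= 1, x in Z^2} swapping x0 and x1 is a formulation
   symmetry, but every optimum has x0 + x1 = 1 and so x0 <> x1. *)
From HB Require Import structures.
From mathcomp Require Import all_boot all_order all_algebra all_fingroup.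
From mathcomp Require Import reals.
From mathcomp Require Import zify lra.
Import Order.TTheory GRing.Theory Num.Theory.
Local Open Scope ring_scope.

Lemma int_addrr_neq1 (R : archiNumDomainType) (x : R) :
  x \is a Num.int -> x + x != 1.
Proof.
case/intrP=> z ->; rewrite -intrD -[1]/(1%:~R) eqr_int.
by apply/eqP; lia.
Qed.

Lemma sum_ord2 (V : nmodType) (F : 'I_2 -> V) : \sum_i F i = F ord0 + F ord_max.
Proof. by rewrite !big_ord_recl big_ord0 addr0; congr (_ + F _); apply: val_inj. Qed.

Section FormulationSymmetry.
Variable R : realType.

Lemma ilp_rep_fixed m n (A : 'M[R]_(m, n)) b c (s : 'S_m) (p : 'S_n) :
    vperm p c = c -> vperm s b = b -> (forall i j, A (s i) (p j) = A i j) ->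
  colperm p (rowperm s (ilp_rep A b c)) = ilp_rep A b c.
Proof.
move=> /matrixP pc /matrixP sb spA; apply/matrixP => i j; rewrite !mxE /ext_perm.
case: (insubP _ (nat_of_ord i)) => [i' _ ei | /negbTE ltiN];
  case: (insubP _ (nat_of_ord j)) => [j' _ ej | /negbTE ltjN];
  rewrite /= -?ei -?ej ?valK ?insubF //.
- by rewrite -[RHS]sb mxE.
- by rewrite -[RHS]pc mxE.
Qed.

Variable f : forall m n : nat, 'M[R]_(m.+1, n.+1) -> 'cV[R]_n.
Hypothesis f_col : forall m n (p : 'S_n) (M : 'M[R]_(m.+1, n.+1)),
  f m n (colperm p M) = vperm p (f m n M).
Hypothesis f_row : forall m n (s : 'S_m) (M : 'M[R]_(m.+1, n.+1)),
  f m n (rowperm s M) = f m n M.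

Lemma prediction_fixed_by_symmetry m n (A : 'M[R]_(m, n)) b c p :
  formulation_symmetry A b c p ->
  vperm p (f m n (ilp_rep A b c)) = f m n (ilp_rep A b c).
Proof.
case=> s [pc [sb spA]].
by rewrite -{1}(f_row _ _ s) -f_col ilp_rep_fixed.
Qed.

End FormulationSymmetry.

Section PairILP.
Variable R : realType.

Definition pair_A : 'M[R]_(1, 2) := const_mx 1.
Definition pair_b : 'cV[R]_1 := const_mx 1.
Definition pair_c : 'cV[R]_2 := const_mx (-1).
Definition swap : 'S_2 := tperm ord0 ord_max.
Definition first_unit : 'cV[R]_2 := \col_i (i == ord0)%:R.

Lemma pair_rowE (x : 'cV[R]_2) i :
  \sum_j pair_A i j * x j 0 = x ord0 0 + x ord_max 0.
Proof. by rewrite sum_ord2 !mxE !mul1r. Qed.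

Lemma pair_objE (x : 'cV[R]_2) : ilp_obj pair_c x = - (x ord0 0 + x ord_max 0).
Proof. by rewrite /ilp_obj sum_ord2 !mxE !mulN1r opprD. Qed.

Lemma pair_feasible_first_unit : ilp_feasible pair_A pair_b first_unit.
Proof.
split=> [j | i]; first by rewrite mxE rpred_nat.
by rewrite pair_rowE !mxE eqxx /= addr0.
Qed.

Lemma pair_optimal_sum x :
  ilp_optimal pair_A pair_b pair_c x -> x ord0 0 + x ord_max 0 = 1.
Proof.
case=> [[_ feas] opt]; have := opt _ pair_feasible_first_unit.
have := feas ord0; rewrite pair_rowE !pair_objE !mxE /= addr0 => le1 ge1.
lra.
Qed.

Lemma pair_optimal_first_unit : ilp_optimal pair_A pair_b pair_c first_unit.
Proof.
split=> [|y [_ feas]]; first exact: pair_feasible_first_unit.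
have := feas ord0; rewrite pair_rowE !pair_objE !mxE /= addr0 => le1.
lra.
Qed.

Lemma swap_neq1 : swap != 1%g.
Proof. by apply/eqP => /permP/(_ ord0); rewrite tpermL perm1. Qed.

Lemma swap_formulation_symmetry : formulation_symmetry pair_A pair_b pair_c swap.
Proof. by exists 1%g; split; [|split]; try apply/matrixP; move=> i j; rewrite !mxE. Qed.

Lemma pair_not_optimal_swap_fixed x :
  vperm swap x = x -> ~ ilp_optimal pair_A pair_b pair_c x.
Proof.
move=> /matrixP/(_ ord0 0); rewrite mxE tpermL => eqx opt.
have [[intx _] _] := opt.
by move/eqP: (pair_optimal_sum x opt); rewrite -eqx; apply/negP/int_addrr_neq1.
Qed.

End PairILP.

Theorem corollary1 (R : realType)
  (f : forall m n : nat, 'M[R]_(m.+1, n.+1) -> 'cV[R]_n)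
  (f_col : forall m n (p : 'S_n) (M : 'M[R]_(m.+1, n.+1)),
      f m n (colperm p M) = vperm p (f m n M))
  (f_row : forall m n (s : 'S_m) (M : 'M[R]_(m.+1, n.+1)),
      f m n (rowperm s M) = f m n M) :
  exists m n (A : 'M[R]_(m, n)) (b : 'cV[R]_m) (c : 'cV[R]_n) (p : 'S_n),
    [/\ p != 1%g, formulation_symmetry A b c p,
        (exists x, ilp_optimal A b c x) &
        ~ ilp_optimal A b c (f m n (ilp_rep A b c))].
Proof.
exists 1%N, 2%N, (pair_A R), (pair_b R), (pair_c R), swap; split.
- exact: swap_neq1.
- exact: swap_formulation_symmetry.
- by exists (first_unit R); apply: pair_optimal_first_unit.
- apply: pair_not_optimal_swap_fixed.
  exact: (@prediction_fixed_by_symmetry R f f_col f_row _ _ _ _ _ _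
            (swap_formulation_symmetry R)).
Qed.
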